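(* Let $H=(V,E)$ be a 3-uniform hypergraph and let real numbers $\gamma_a$ ($a\in V$) satisfy $\gamma_a+\gamma_b+\gamma_c=-1$ for every edge $\{a,b,c\}\in E$ (e.g. $\gamma_a=\langle\mathbf v_a,\mathbf v_\emptyset\rangle$ for a feasible solution of the SDP: unit vectors $\mathbf v_a$, $a\in V\cup\{\emptyset\}$, with $\mathbf v_a+\mathbf v_b+\mathbf v_c=-\mathbf v_\emptyset$ for every edge). Define $\ell_0=-1$, $u_0=1$ and for $j\ge0$: if $j$ is even, $\ell_{j+1}=\ell_j$, $u_{j+1}=\frac{\ell_j+u_j}{2}$; if $j$ is odd, $\ell_{j+1}=\frac{\ell_j+u_j}{2}$, $u_{j+1}=u_j$; let $I_j=[\ell_j,u_j]$ and $S_{j+1}=\{a\in V:\gamma_a\in I_j\setminus I_{j+1}\}$. Then for every $j\ge0$ and every edge $e\in E$ such that $\gamma_v\in I_j$ for all $v\in e$, we have $|S_{j+1}\cap e|\le1$. *)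

From HB Require Import structures.
From mathcomp Require Import all_boot all_order all_algebra.
Set Implicit Arguments. Unset Strict Implicit. Unset Printing Implicit Defensive.
Import Order.TTheory GRing.Theory Num.Theory.
Local Open Scope ring_scope.

Fixpoint bounds (R : realFieldType) (j : nat) : R * R :=
  match j with
  | 0 => (-1, 1)
  | j'.+1 =>
      let lu := bounds R j' in
      if odd j' then ((lu.1 + lu.2) / 2, lu.2)
      else (lu.1, (lu.1 + lu.2) / 2)
  end.

Definition ell (R : realFieldType) (j : nat) : R := (bounds R j).1.
Definition uu (R : realFieldType) (j : nat) : R := (bounds R j).2.

Definition inI (R : realFieldType) (j : nat) (x : R) : bool :=
  (ell R j <= x) && (x <= uu R j).

Definition Sset (R : realFieldType) (V : finType) (gamma : V -> R) (j : nat)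
  : {set V} :=
  [set a | inI j (gamma a) && ~~ inI j.+1 (gamma a)].

From mathcomp Require Import all_boot all_order all_algebra.
From mathcomp Require Import lra.
Set Implicit Arguments. Unset Strict Implicit. Unset Printing Implicit Defensive.
Import Order.TTheory GRing.Theory Num.Theory.
Local Open Scope ring_scope.

(* When I_j is halved, twice the endpoint that stays plus the endpoint that
   moves equals -1. A point leaving I_j at step j+1 lies strictly beyond the
   midpoint, on the side of the moving endpoint, so two such points and a
   third point of I_j sum to something strictly on one side of
   2 * mid + (fixed endpoint) = -1; hence no edge with sum -1 meets S_{j+1}
   twice. *)

Lemma ellS (R : realFieldType) (j : nat) :
  ell R j.+1 = if odd j then (ell R j + uu R j) / 2 else ell R j.
Proof. by rewrite /ell /=; case: (odd j). Qed.

Lemma uuS (R : realFieldType) (j : nat) :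
  uu R j.+1 = if odd j then uu R j else (ell R j + uu R j) / 2.
Proof. by rewrite /uu /=; case: (odd j). Qed.

Lemma bounds_invariant (R : realFieldType) (j : nat) :
  if odd j then ell R j + 2 * uu R j = -1 else 2 * ell R j + uu R j = -1.
Proof.
elim: j => [|j IH]; first by rewrite /ell /uu /=; lra.
rewrite ellS uuS /=; case: (odd j) IH => /= IH; lra.
Qed.

Lemma escape_beyond_mid (R : realFieldType) (j : nat) (x : R) :
  inI j x -> ~~ inI j.+1 x ->
  if odd j then x < (ell R j + uu R j) / 2 else (ell R j + uu R j) / 2 < x.
Proof.
rewrite /inI ellS uuS; case: (odd j) => /andP [lx xu];
  rewrite negb_and -!ltNge => /orP [] //; lra.
Qed.

Lemma escapees_sum_neq (R : realFieldType) (j : nat) (x y z : R) :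
  inI j x -> ~~ inI j.+1 x -> inI j y -> ~~ inI j.+1 y -> inI j z ->
  x + y + z != -1.
Proof.
move=> Ix /(escape_beyond_mid Ix) + Iy /(escape_beyond_mid Iy) + /andP [lz zu].
have := bounds_invariant R j.
by case: (odd j) => inv mx my; apply/eqP; lra.
Qed.

Lemma big_card3_pair (M : nmodType) (T : finType) (f : T -> M) (e : {set T})
  (x y : T) :
  #|e| = 3%N -> x \in e -> y \in e -> x != y ->
  exists2 z, z \in e & \sum_(v in e) f v = f x + f y + f z.
Proof.
move=> e3 xe ye xy.
have ye' : y \in e :\ x by rewrite !inE eq_sym xy.
have : #|e :\ x :\ y| = 1%N.
  by move: e3; rewrite (cardsD1 x e) xe (cardsD1 y (e :\ x)) ye' !add1n => -[].
move=> /eqP/cards1P [z ez]; exists z.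
  by have := set11 z; rewrite -ez !inE => /andP [_ /andP [_ ->]].
by rewrite (big_setD1 x xe) (big_setD1 y ye') ez big_set1 /= addrA.
Qed.

Theorem lemma3p4 (R : realFieldType) (V : finType) (E : {set {set V}})
  (gamma : V -> R)
  (H3 : forall e, e \in E -> #|e| = 3%N)
  (Hsum : forall e, e \in E -> \sum_(v in e) gamma v = -1)
  (j : nat) (e : {set V}) (he : e \in E)
  (hI : forall v, v \in e -> inI j (gamma v)) :
  (#|Sset gamma j :&: e| <= 1)%N.
Proof.
rewrite leqNgt; apply/card_gt1P => -[x [y []]].
rewrite !inE => /andP [/andP [Ix NIx] xe] /andP [/andP [Iy NIy] ye] xy.
have [z ze sum_e] := big_card3_pair gamma (H3 e he) xe ye xy.
have := escapees_sum_neq Ix NIx Iy NIy (hI z ze).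
by rewrite -sum_e Hsum ?eqxx.
Qed.
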